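(* Let $G$ be a finite group with exponent $n_1$ and conjugacy class scheme $\mathcal{A}$, and let $\mathcal{L}=\mathbb{Q}(\zeta_{n_1})$. Let $F$ be a subfield of $\mathcal{L}$, let $\tau_k\in\mathrm{Gal}(\mathcal{L}/\mathbb{Q})$ be given by $\tau_k(\zeta_{n_1})=\zeta_{n_1}^k$ for $k\in\mathbb{Z}_{n_1}^*$, and let $Z_F=\{k\in\mathbb{Z}_{n_1}^*:\tau_k\in\mathrm{Gal}(\mathcal{L}/F)\}$. Define $g\sim_F h$ iff $g$ is conjugate to $h^k$ for some $k\in Z_F$. Then the set of matrices in $\mathcal{L}[\mathcal{A}]$ all of whose entries and eigenvalues lie in $F$ equals the $F$-span of the matrices $B_{[g]}=\sum_{h\sim_F g}A_h$, one for each $\sim_F$ equivalence class, and these form a subscheme of $\mathcal{A}$. In particular, a normal Cayley digraph $X(G,C)$ has all its eigenvalues in $F$ if and only if $C$ is a union of equivalence classes of $\sim_F$.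
   Context: For a finite group $G$ of order $n$ (written multiplicatively, identity $1$), $A_g$ is the $n\times n$ permutation matrix indexed by $G$ with $(A_g)_{a,b}=1$ iff $ba^{-1}=g$; for $C\subseteq G$, $A_C=\sum_{g\in C}A_g$, the adjacency matrix of the Cayley digraph $X(G,C)$ (arc $a\to b$ iff $ba^{-1}\in C$). If $K_0,\ldots,K_d$ are the conjugacy classes of $G$ and $A_i=A_{K_i}$, then $\mathcal{A}=\{A_0,\ldots,A_d\}$ is an association scheme, the conjugacy class scheme; $\mathcal{L}[\mathcal{A}]$ is its $\mathcal{L}$-span. $X(G,C)$ is normal if $C$ is a union of conjugacy classes. The exponent $n_1$ is the least positive integer with $g^{n_1}=1$ for all $g$, and $\zeta_{n_1}=e^{2\pi i/n_1}$. A subscheme of $\mathcal{A}$ is an association scheme whose members are sums of members of $\mathcal{A}$ over blocks of a partition of $\mathcal{A}$. *)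

From HB Require Import structures.
From mathcomp Require Import all_boot all_order all_algebra all_fingroup all_solvable all_field.
From mathcomp Require Import boolp.
Set Implicit Arguments. Unset Strict Implicit. Unset Printing Implicit Defensive.
Import GRing.Theory Num.Theory.
Local Open Scope ring_scope.

(* The finite group G is the whole carrier of a finGroupType gT.
   Matrices indexed by G are #|gT| x #|gT| matrices over algC, rows/columns
   numbered through enum_val. *)

Definition Amat (gT : finGroupType) (g : gT) : 'M[algC]_#|gT| :=
  \matrix_(i, j) ((enum_val j * (enum_val i)^-1 == g)%g)%:R.

Definition AmatS (gT : finGroupType) (C : {set gT}) : 'M[algC]_#|gT| :=
  \sum_(g in C) Amat g.

Definition expo (gT : finGroupType) : nat := exponent [set: gT].

Definition inL (z x : algC) : Prop :=
  exists p : {poly rat}, x = (map_poly ratr p).[z].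

Definition is_subfield (F : algC -> Prop) : Prop :=
  [/\ F 0, F 1,
      (forall x y, F x -> F y -> F (x - y)),
      (forall x y, F x -> F y -> F (x * y)) &
      (forall x, F x -> x != 0 -> F x^-1)].

(* k in Z_F : k a unit mod n1 and tau_k (p(z) |-> p(z^k)) fixes F pointwise *)
Definition inZF (n1 : nat) (z : algC) (F : algC -> Prop) (k : nat) : Prop :=
  [/\ (k < n1)%N, coprime k n1 &
      forall p : {poly rat}, F (map_poly ratr p).[z] ->
        (map_poly ratr p).[z ^+ k] = (map_poly ratr p).[z]].

Definition simF (gT : finGroupType) (z : algC) (F : algC -> Prop) (g h : gT) : Prop :=
  exists k, inZF (expo gT) z F k /\ g \in ((h ^+ k) ^: [set: gT])%g.

Definition Bmat (gT : finGroupType) (z : algC) (F : algC -> Prop) (g : gT)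
  : 'M[algC]_#|gT| :=
  \sum_(h : gT | `[< simF z F h g >]) Amat h.

Definition in_LA (gT : finGroupType) (z : algC) (M : 'M[algC]_#|gT|) : Prop :=
  exists c : {set gT} -> algC, (forall K, inL z (c K)) /\
    M = \sum_(K in classes [set: gT]) c K *: AmatS K.

Definition in_FspanB (gT : finGroupType) (z : algC) (F : algC -> Prop)
  (M : 'M[algC]_#|gT|) : Prop :=
  exists c : gT -> algC, (forall g, F (c g)) /\
    M = \sum_(g : gT) c g *: Bmat z F g.

(* (possibly non-symmetric) association scheme, given as the set S of its
   members: nonzero 0/1 matrices, partitioning J, containing I, closed under
   transpose, with well-defined intersection numbers *)
Definition is_assoc_scheme (n : nat) (S : 'M[algC]_n -> Prop) : Prop :=
  [/\ (forall M, S M -> M != 0 /\ forall i j, M i j = 0 \/ M i j = 1),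
      S 1%:M,
      (forall i j, exists! M, S M /\ M i j = 1),
      (forall M, S M -> S M^T) &
      (forall M N P, S M -> S N -> S P ->
         forall i j i' j', P i j = 1 -> P i' j' = 1 ->
           (M *m N) i j = (M *m N) i' j')].

Definition is_subscheme (gT : finGroupType) (S : 'M[algC]_#|gT| -> Prop) : Prop :=
  is_assoc_scheme S /\
  exists blocks : {set {set {set gT}}},
    partition blocks (classes [set: gT]) /\
    forall M, S M <-> exists2 b, b \in blocks & M = \sum_(K in b) AmatS K.

From HB Require Import structures.
From mathcomp Require Import all_boot all_order all_algebra all_fingroup all_solvable all_field.
From mathcomp Require Import boolp.
From mathcomp Require Import all_character.
Set Implicit Arguments. Unset Strict Implicit. Unset Printing Implicit Defensive.
Import GRing.Theory Num.Theory.
Local Open Scope ring_scope.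

(* For a class function c, the group matrix M_c = (c (b a^-1))_(a,b) = \sum_g c g A_g has
   the character rows (chi (b y))_b as left eigenvectors, with eigenvalue the central
   character omega_chi(c) = \sum_x c x chi(x^-1) / chi(1). These rows span, so the
   omega_chi(c) are all the eigenvalues of M_c and they determine c. The automorphism
   tau_k maps chi(x) to chi(x^k), hence maps omega_chi(c) to omega_chi(x |-> c(x^k')),
   k k' = 1 mod n1, whenever tau_k fixes the values of c. With the Galois correspondence
   in Q(zeta_n1), an F-valued class function c thus has all its eigenvalues in F iff
   c(x^k) = c(x) for all k in Z_F, i.e. iff c is constant on the ~F classes. The three
   statements are instances: the B_[g] are the indicator matrices of the ~F classes, the
   convolution of two such indicators is again F-valued with eigenvalues in F (which gives
   the intersection numbers), and A_C is the indicator matrix of C. *)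

Section GroupMatrix.
Variable gT : finGroupType.
Local Notation G := [set: gT]%G.

Definition group_mx (c : gT -> algC) : 'M[algC]_#|gT| :=
  \matrix_(i, j) c (enum_val j * (enum_val i)^-1)%g.

Definition conv (c1 c2 : gT -> algC) w := \sum_x c1 x * c2 (w * x^-1)%g.

Definition conj_invariant (c : gT -> algC) := forall x y, c (x ^ y)%g = c x.

Lemma sum_enum_val (f : gT -> algC) : \sum_(i < #|gT|) f (enum_val i) = \sum_x f x.
Proof. by rewrite -(big_enum_val (A := predT)). Qed.

Lemma group_mx_ext (c d : gT -> algC) : c =1 d -> group_mx c = group_mx d.
Proof. by move=> eq_cd; apply/matrixP => i j; rewrite !mxE eq_cd. Qed.

Lemma group_mx1 (c : gT -> algC) x : group_mx c (enum_rank 1%g) (enum_rank x) = c x.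
Proof. by rewrite mxE !enum_rankK invg1 mulg1. Qed.

Lemma group_mx_sum (I : finType) (P : pred I) (a : I -> algC) (f : I -> gT -> algC) :
  \sum_(i | P i) a i *: group_mx (f i) = group_mx (fun h => \sum_(i | P i) a i * f i h).
Proof.
by apply/matrixP => i j; rewrite summxE !mxE; apply: eq_bigr => k _; rewrite !mxE.
Qed.

Lemma sum_Amat (c : gT -> algC) : \sum_g c g *: Amat g = group_mx c.
Proof.
apply/matrixP => i j; rewrite summxE !mxE.
rewrite (bigD1 (enum_val j * (enum_val i)^-1)%g) //= !mxE eqxx mulr1.
by rewrite big1 ?addr0 // => g /negbTE ne; rewrite !mxE eq_sym ne mulr0.
Qed.

Lemma sum_Amat_pred (P : pred gT) : \sum_(g | P g) Amat g = group_mx (fun g => (P g)%:R).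
Proof.
rewrite -sum_Amat big_mkcond; apply: eq_bigr => g _.
by case: (P g); rewrite ?scale1r ?scale0r.
Qed.

Lemma AmatS_group_mx (C : {set gT}) : AmatS C = group_mx (fun g => (g \in C)%:R).
Proof. exact: sum_Amat_pred. Qed.

Lemma sum_classes_AmatS (cK : {set gT} -> algC) :
  \sum_(K in classes G) cK K *: AmatS K = group_mx (fun g => cK (g ^: G)%g).
Proof.
rewrite -sum_Amat (partition_big (fun g => g ^: G)%g (mem (classes G))) /=; last first.
  by move=> g _; apply: mem_classes; rewrite in_setT.
apply: eq_bigr => _ /imsetP[x _ ->]; rewrite /AmatS scaler_sumr.
apply: eq_big => [g | g /class_eqP -> //].
by apply/idP/eqP => [/class_eqP | <-] //; apply: class_refl.
Qed.

Lemma repr_class_conjg (g : gT) : exists y, repr (g ^: G)%g = (g ^ y)%g.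
Proof.
have /imsetP[y _ ->] : repr (g ^: G)%g \in (g ^: G)%g by apply: mem_repr (class_refl _ _).
by exists y.
Qed.

Lemma group_mxM (c1 c2 : gT -> algC) :
  group_mx c1 *m group_mx c2 = group_mx (conv c1 c2).
Proof.
apply/matrixP => i j; rewrite !mxE.
under eq_bigr do rewrite !mxE.
rewrite (sum_enum_val (fun y => c1 (y * (enum_val i)^-1)%g * c2 (enum_val j * y^-1)%g)).
rewrite (reindex_inj (mulIg (enum_val i))) /=; apply: eq_bigr => x _.
by rewrite mulgK invMg mulgA.
Qed.

Lemma conj_invariant_conv (c1 c2 : gT -> algC) :
  conj_invariant c1 -> conj_invariant c2 -> conj_invariant (conv c1 c2).
Proof.
move=> c1_inv c2_inv w y; rewrite /conv (reindex_inj (conjg_inj y)) /=.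
by apply: eq_bigr => x _; rewrite c1_inv -conjVg -conjMg c2_inv.
Qed.

End GroupMatrix.

Definition prod_shift_mx (R : comNzRingType) n (A : 'M[R]_n) (s : seq R) : 'M[R]_n :=
  foldr (fun (x : R) (P : 'M[R]_n) => (A - x%:M) *m P) (1%:M : 'M[R]_n) s.

Lemma eigenvector_prod_shift_mx (R : comNzRingType) n (A : 'M[R]_n) (v : 'rV[R]_n) a s :
  v *m A = a *: v -> v *m prod_shift_mx A s = (\prod_(x <- s) (a - x)) *: v.
Proof.
move=> Av; elim: s => [|x s IHs] /=; first by rewrite big_nil scale1r mulmx1.
rewrite big_cons mulmxA mulmxBr Av mul_mx_scalar -scalerBl -scalemxAl IHs.
by rewrite scalerA.
Qed.

Section CentralCharacter.
Variable gT : finGroupType.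
Local Notation G := [set: gT]%G.

Definition central_char (i : Iirr G) (c : gT -> algC) :=
  (\sum_x c x * 'chi_i (x^-1)%g) / 'chi_i 1%g.

Definition char_row (i : Iirr G) (y : gT) : 'rV[algC]_#|gT| :=
  \row_j 'chi_i (enum_val j * y)%g.

Lemma irr_mxtrace (i : Iirr G) x : 'chi_i x = \tr ('Chi_i x).
Proof. by rewrite -irrRepr cfunE in_setT mulr1n. Qed.

(* The operator \sum_x c x Chi_i(x^-1) commutes with Chi_i, hence is scalar by Schur. *)
Lemma sum_conj_invariant_irr (c : gT -> algC) (i : Iirr G) w : conj_invariant c ->
  \sum_x c x * 'chi_i (x^-1 * w)%g = central_char i c * 'chi_i w.
Proof.
move=> c_inv; pose rG := 'Chi_i; pose T := \sum_x c x *: rG (x^-1)%g.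
have cent_T : centgmx rG T.
  apply/centgmxP => y _; rewrite mulmx_sumr mulmx_suml.
  rewrite (reindex_inj (conjg_inj y^-1)%g) /=.
  apply: eq_bigr => x _; rewrite c_inv -!scalemxAl -scalemxAr -!repr_mxM ?in_setT //.
  by rewrite conjgE !invMg invgK mulgKV.
have /is_scalar_mxP[s Ts] := mx_abs_irr_cent_scalar (groupC (socle_irr _)) cent_T.
have sumT w' : \sum_x c x * 'chi_i (x^-1 * w')%g = s * 'chi_i w'.
  have -> : s * 'chi_i w' = \tr (T *m rG w').
    by rewrite Ts mul_scalar_mx mxtraceZ irr_mxtrace.
  rewrite mulmx_suml raddf_sum; apply: eq_bigr => x _.
  by rewrite /= -scalemxAl mxtraceZ -repr_mxM ?in_setT // irr_mxtrace.
rewrite sumT /central_char; congr (_ * _).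
under eq_bigr do rewrite -[_^-1%g]mulg1.
by rewrite sumT mulfK ?irr1_neq0.
Qed.

Lemma char_row_eigen (c : gT -> algC) i y : conj_invariant c ->
  char_row i y *m group_mx c = central_char i c *: char_row i y.
Proof.
move=> c_inv; apply/rowP => j; rewrite !mxE.
under eq_bigr do rewrite !mxE.
rewrite (sum_enum_val (fun a => 'chi_i (a * y)%g * c (enum_val j * a^-1)%g)).
rewrite (reindex_inj (h := fun x => x^-1 * enum_val j)%g); last first.
  by move=> x1 x2 /mulIg /invg_inj.
rewrite -sum_conj_invariant_irr //; apply: eq_bigr => x _.
by rewrite invMg invgK mulgA mulgV mul1g mulrC mulgA.
Qed.

(* The unit rows are combinations of character rows, by the column orthogonality
   relation \sum_i chi_i(1) chi_i(w) = |G| [w = 1]. *)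
Lemma char_rows_eq0 (A : 'M[algC]_#|gT|) :
  (forall i y, char_row i y *m A = 0) -> A = 0.
Proof.
move=> rowsA0; apply/row_matrixP => j; rewrite row0 rowE.
have -> : delta_mx 0 j =
    (#|gT|%:R)^-1 *: \sum_i 'chi[G]_i 1%g *: char_row i (enum_val j)^-1.
  apply/rowP => k; rewrite !mxE summxE.
  under eq_bigr do rewrite !mxE.
  set w := (enum_val k * (enum_val j)^-1)%g.
  have -> : \sum_i 'chi[G]_i 1%g * 'chi_i w = #|gT|%:R *+ (w == 1%g).
    rewrite -cardsT -cfRegE cfReg_sum sum_cfunE; apply: eq_bigr => i _.
    by rewrite cfunE.
  rewrite /w -eq_mulgV1 (inj_eq enum_val_inj) eqxx /=.
  have nz_G : (#|gT|%:R : algC) != 0 by rewrite pnatr_eq0 -lt0n -cardsT cardG_gt0.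
  by case: (k == j); rewrite /= ?mulr0n ?mulr0 // mulr1n mulVf.
rewrite -scalemxAl mulmx_suml big1 ?scaler0 // => i _.
by rewrite -scalemxAl rowsA0 scaler0.
Qed.

Lemma char_row1_neq0 i : char_row i 1%g != 0.
Proof.
apply/eqP => /rowP /(_ (enum_rank 1%g)); rewrite !mxE enum_rankK mulg1.
by move/eqP; rewrite (negbTE (irr1_neq0 i)).
Qed.

Lemma eigenvalue_central_char (c : gT -> algC) i :
  conj_invariant c -> eigenvalue (group_mx c) (central_char i c).
Proof.
move=> c_inv; apply/eigenvalueP; exists (char_row i 1%g).
  exact: char_row_eigen.
exact: char_row1_neq0.
Qed.

Lemma eigenvalue_group_mx (c : gT -> algC) a : conj_invariant c ->
  eigenvalue (group_mx c) a -> exists i, a = central_char i c.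
Proof.
move=> c_inv /eigenvalueP[v Av nz_v].
pose s := [seq central_char i c | i <- enum 'I_(Nirr G)].
have annih : prod_shift_mx (group_mx c) s = 0.
  apply: char_rows_eq0 => i y.
  rewrite (eigenvector_prod_shift_mx _ (char_row_eigen i y c_inv)).
  rewrite (big_rem (central_char i c)) /=; last by apply: map_f; rewrite mem_enum.
  by rewrite subrr mul0r scale0r.
have := eigenvector_prod_shift_mx s Av; rewrite annih mulmx0 => /esym/eqP.
rewrite scaler_eq0 (negbTE nz_v) orbF prodf_seq_eq0 => /hasP[x].
by move=> /mapP[i _ ->]; rewrite subr_eq0 => /eqP ->; exists i.
Qed.

Lemma central_char_eq0 (c : gT -> algC) : conj_invariant c ->
  (forall i, central_char i c = 0) -> c =1 (fun=> 0).
Proof.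
move=> c_inv omega0 x.
have : group_mx c = 0 by apply: char_rows_eq0 => i y; rewrite char_row_eigen // omega0 scale0r.
by move/matrixP => /(_ (enum_rank 1%g) (enum_rank x)); rewrite group_mx1 mxE.
Qed.

Lemma central_charB (i : Iirr G) (c d : gT -> algC) :
  central_char i (fun x => c x - d x) = central_char i c - central_char i d.
Proof.
rewrite /central_char -mulrBl -sumrB; congr (_ / _).
by apply: eq_bigr => x _; rewrite mulrBl.
Qed.

Lemma central_charM (c1 c2 : gT -> algC) i : conj_invariant c1 -> conj_invariant c2 ->
  central_char i (conv c1 c2) = central_char i c1 * central_char i c2.
Proof.
move=> c1_inv c2_inv; have := char_row_eigen i 1%g (conj_invariant_conv c1_inv c2_inv).
rewrite -group_mxM mulmxA !char_row_eigen // -scalemxAl char_row_eigen // scalerA.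
move/eqP; rewrite -subr_eq0 -scalerBl scaler_eq0 (negbTE (char_row1_neq0 _)) orbF.
by rewrite subr_eq0 => /eqP.
Qed.

End CentralCharacter.

Lemma mul_expn_totient_pred n k : (0 < n)%N -> coprime k n ->
  (k * k ^ (totient n).-1 = 1 %[mod n])%N.
Proof.
by move=> n_gt0 co_kn; rewrite -expnS prednK ?totient_gt0 //; apply: Euler_exp_totient.
Qed.

Section PowerMaps.
Variable gT : finGroupType.
Local Notation G := [set: gT]%G.
Local Notation n1 := (expo gT).

Lemma expo_gt0 : (0 < n1)%N.
Proof. exact: exponent_gt0. Qed.

Lemma expg_expo (y : gT) : (y ^+ n1)%g = 1%g.
Proof. by apply: expg_exponent; rewrite in_setT. Qed.

Lemma expg_mod_expo (y : gT) k : (y ^+ (k %% n1))%g = (y ^+ k)%g.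
Proof. exact: expg_mod (expg_expo y). Qed.

Lemma expgK_mod k k' (y : gT) : (k * k' = 1 %[mod n1])%N -> ((y ^+ k) ^+ k')%g = y.
Proof. by move=> kk'1; rewrite -expgM -expg_mod_expo kk'1 expg_mod_expo expg1. Qed.

Lemma expo_inv k : coprime k n1 -> exists k', (k * k' = 1 %[mod n1])%N.
Proof.
by move=> co_k; exists (k ^ (totient n1).-1)%N; apply: mul_expn_totient_pred expo_gt0 co_k.
Qed.

Lemma conj_invariant_expg (c : gT -> algC) k :
  conj_invariant c -> conj_invariant (fun x => c (x ^+ k)%g).
Proof. by move=> c_inv x y /=; rewrite -conjXg c_inv. Qed.

(* u acts on n1-th roots of unity, hence on Q(zeta_n1), as the Galois automorphism tau_k. *)
Definition acts_as_expn (u : {rmorphism algC -> algC}) k :=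
  forall e, e ^+ n1 = 1 -> u e = e ^+ k.

Lemma irr_expg_sum_unity (i : Iirr G) x : exists m (e : 'I_m -> algC),
  (forall j, e j ^+ n1 = 1) /\ forall k, 'chi_i (x ^+ k)%g = \sum_j e j ^+ k.
Proof.
have [e [[B uB rGx] [e1 _] _ _]] := repr_rsim_diag 'Chi_i (in_setT x).
exists _, (fun j => e 0 j); split.
  move=> j; have /dvdnP[q ->] : (#[x]%g %| n1)%N by apply: dvdn_exponent; rewrite in_setT.
  by rewrite mulnC exprM e1 expr1n.
move=> k; rewrite irr_mxtrace.
have -> : 'Chi_i (x ^+ k)%g = invmx B *m diag_mx (\row_j e 0 j ^+ k) *m B.
  elim: k => [|k IHk].
    have -> : \row_j e 0 j ^+ 0 = const_mx 1 by apply/rowP => j; rewrite !mxE expr0.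
    by rewrite diag_const_mx mulmx1 mulVmx // expg0 repr_mx1.
  rewrite expgSr repr_mxM ?in_setT // IHk rGx.
  rewrite -!mulmxA (mulmxA B) mulmxV // mul1mx (mulmxA (diag_mx _)) mulmx_diag.
  by congr (_ *m (diag_mx _ *m _)); apply/rowP => j; rewrite !mxE exprSr.
rewrite -mulmxA mxtrace_mulC -mulmxA mulmxV // mulmx1 mxtrace_diag.
by apply: eq_bigr => j _; rewrite mxE.
Qed.

Lemma irr_acts_as_expn u k (i : Iirr G) x :
  acts_as_expn u k -> u ('chi_i x) = 'chi_i (x ^+ k)%g.
Proof.
move=> u_k; have [m [e [e1 eE]]] := irr_expg_sum_unity i x.
rewrite -[x in 'chi_i x]expg1 !eE rmorph_sum; apply: eq_bigr => j _.
by rewrite expr1 u_k.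
Qed.

Lemma central_char_acts_as_expn u k k' (i : Iirr G) (c : gT -> algC) :
  acts_as_expn u k -> (k * k' = 1 %[mod n1])%N -> (forall x, u (c x) = c x) ->
  u (central_char i c) = central_char i (fun x => c (x ^+ k')%g).
Proof.
move=> u_k kk'1 u_c; rewrite /central_char fmorph_div (irr_acts_as_expn _ _ u_k).
rewrite expg1n rmorph_sum; congr (_ / _).
rewrite (reindex_inj (h := fun y => (y ^+ k')%g)) /=; last first.
  by move=> y1 y2 /(congr1 (fun y => (y ^+ k)%g)); rewrite !expgK_mod // mulnC.
apply: eq_bigr => y _; rewrite rmorphM u_c (irr_acts_as_expn _ _ u_k).
by rewrite expgVn expgK_mod // mulnC.
Qed.

(* Central characters determine c (central_char_eq0), and u maps them to those of
   x |-> c (x ^+ k'). *)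
Lemma central_char_fixedP u k (c : gT -> algC) :
  conj_invariant c -> coprime k n1 -> acts_as_expn u k -> (forall x, u (c x) = c x) ->
  (forall i, u (central_char i c) = central_char i c) <-> (forall x, c (x ^+ k)%g = c x).
Proof.
move=> c_inv co_k u_k u_c; have [k' kk'1] := expo_inv co_k.
split=> [u_omega | c_k i].
  pose d y := c y - c (y ^+ k')%g.
  have d_inv : conj_invariant d by move=> y w; rewrite /d c_inv (conj_invariant_expg k' c_inv).
  have c_k' y : c y = c (y ^+ k')%g.
    apply/eqP; rewrite -subr_eq0; apply/eqP; apply: (central_char_eq0 d_inv) => i.
    by rewrite central_charB -(central_char_acts_as_expn i u_k kk'1 u_c) u_omega subrr.
  by move=> x; rewrite c_k' expgK_mod.
rewrite (central_char_acts_as_expn i u_k kk'1 u_c); congr (_ / _).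
by apply: eq_bigr => x _; rewrite -c_k expgK_mod // mulnC.
Qed.

End PowerMaps.

Lemma rmorph_horner_ratr (R S : fieldType) (f : {rmorphism R -> S}) (q : {poly rat}) y :
  f (map_poly ratr q).[y] = (map_poly ratr q).[f y].
Proof.
rewrite -horner_map -map_poly_comp; congr (_.[_]).
by apply: eq_map_poly => a /=; rewrite fmorph_rat.
Qed.

Section QzetaElements.
Variable z : algC.

Lemma inL_add x y : inL z x -> inL z y -> inL z (x + y).
Proof. by move=> [p ->] [q ->]; exists (p + q); rewrite rmorphD hornerD. Qed.

Lemma inL_mul x y : inL z x -> inL z y -> inL z (x * y).
Proof. by move=> [p ->] [q ->]; exists (p * q); rewrite rmorphM hornerM. Qed.

Lemma inL_rat r : inL z (ratr r).
Proof. by exists r%:P; rewrite map_polyC hornerC. Qed.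

Lemma inL_exp m : inL z (z ^+ m).
Proof. by exists 'X^m; rewrite map_polyXn hornerXn. Qed.

Lemma inL_sum (I : Type) (r : seq I) (P : pred I) (f : I -> algC) :
  (forall i, P i -> inL z (f i)) -> inL z (\sum_(i <- r | P i) f i).
Proof.
move=> Lf; apply: big_ind => //; last exact: inL_add.
by exists 0; rewrite rmorph0 horner0.
Qed.

End QzetaElements.

Section Subfield.
Variables (F : algC -> Prop) (hF : is_subfield F).

Lemma subfield0 : F 0. Proof. by case: hF. Qed.
Lemma subfield1 : F 1. Proof. by case: hF. Qed.
Lemma subfieldB x y : F x -> F y -> F (x - y). Proof. by case: hF => _ _ FB _ _; apply: FB. Qed.
Lemma subfieldM x y : F x -> F y -> F (x * y). Proof. by case: hF => _ _ _ FM _; apply: FM. Qed.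

Lemma subfieldN x : F x -> F (- x).
Proof. by move=> Fx; rewrite -sub0r; apply: subfieldB subfield0 Fx. Qed.

Lemma subfieldD x y : F x -> F y -> F (x + y).
Proof. by move=> Fx Fy; rewrite -[y]opprK; apply/subfieldB/subfieldN. Qed.

Lemma subfieldV x : F x -> F x^-1.
Proof.
case: hF => _ _ _ _ FV Fx; have [->|nz_x] := eqVneq x 0; last exact: FV.
by rewrite invr0; apply: subfield0.
Qed.

Lemma subfieldX x m : F x -> F (x ^+ m).
Proof.
move=> Fx; elim: m => [|m IHm]; first by rewrite expr0; apply: subfield1.
by rewrite exprS; apply: subfieldM.
Qed.

Lemma subfield_nat m : F m%:R.
Proof.
by elim: m => [|m IHm]; [apply: subfield0 | rewrite -addn1 natrD; apply: subfieldD IHm subfield1].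
Qed.

Lemma subfield_rat r : F (ratr r).
Proof.
have F_int m : F m%:~R.
  by case: m => m; rewrite ?NegzE ?mulrNz; [|apply: subfieldN]; apply: subfield_nat.
by rewrite -[r]divq_num_den fmorph_div !rmorph_int; apply/subfieldM/subfieldV.
Qed.

Lemma subfield_sum (I : Type) (r : seq I) (P : pred I) (f : I -> algC) :
  (forall i, P i -> F (f i)) -> F (\sum_(i <- r | P i) f i).
Proof. by move=> Ff; apply: big_ind => //; [apply: subfield0 | apply: subfieldD]. Qed.

End Subfield.

Lemma cyclotomic_splitting_field n (z : algC) : n.-primitive_root z ->
  {Qn : splittingFieldType rat & galois 1 {:Qn} &
    {f : {rmorphism Qn -> algC} & {w : Qn | f w = z}}}.
Proof.
move=> prim_z; have n_gt0 := prim_order_gt0 prim_z.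
have [Qn [f [[|w []] // [fw] genQn]]] := num_field_exists [:: z].
have prim_w : n.-primitive_root w by rewrite -fw fmorph_primitive_root in prim_z.
have Xn1_rat : ('X^n - 1 : {poly Qn}) \is a polyOver 1%AS.
  by rewrite rpredB ?rpred1 ?rpredX //= polyOverX.
have splitXn1 : splittingFieldFor 1 ('X^n - 1) {:Qn}.
  pose r := codom (fun i : 'I_n => w ^+ i).
  have Dr : 'X^n - 1 = \prod_(y <- r) ('X - y%:P).
    by rewrite -(factor_Xn_sub_1 prim_w) big_mkord big_image.
  exists r; first by rewrite -Dr eqpxx.
  apply/eqP; rewrite eqEsubv subvf -genQn adjoin_seqSr //; apply/allP => /=.
  by rewrite andbT -root_prod_XsubC -Dr; apply/unity_rootP/prim_expr_order.
have Qn_split : FieldExt_isSplittingField _ Qn by constructor; exists ('X^n - 1).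
exists (HB.pack_for (splittingFieldType rat) Qn Qn_split).
  apply/splitting_galoisField; exists ('X^n - 1); split => //.
  apply: separable_Xn_sub_1; rewrite -(fmorph_eq0 f) rmorph_nat.
  by rewrite pnatr_eq0 -lt0n.
by exists f, w.
Qed.

(* Take a subfield of maximal dimension mapped into F: adjoining any further y with
   f y in F would increase that dimension. *)
Lemma preim_subfield (L : fieldExtType rat) (f : {rmorphism L -> algC})
  (F : algC -> Prop) : is_subfield F ->
  exists U : {subfield L}, forall x, x \in U <-> F (f x).
Proof.
move=> hF; pose into_F (U : {subfield L}) := forall x, x \in U -> F (f x).
have into_F_adjoin U y : into_F U -> F (f y) -> into_F <<U; y>>%AS.
  move=> FU Fy x /Fadjoin_polyP[q qU ->]; rewrite horner_coef rmorph_sum.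
  apply: (subfield_sum hF) => i _; rewrite rmorphM rmorphXn.
  by apply: (subfieldM hF); [apply/FU/polyOverP | apply: (subfieldX hF)].
have into_F1 : into_F 1%AS.
  by move=> x /vlineP[a ->]; rewrite rmorphZ_num rmorph1 mulr1; apply: (subfield_rat hF).
pose dim_into_F d := `[< exists U, into_F U /\ \dim U = d >].
have ex_dim : exists d, dim_into_F d.
  by exists (\dim (1%AS : {subfield L})); apply/asboolP; exists 1%AS.
have dim_ub d : dim_into_F d -> (d <= \dim {:L})%N.
  by move=> /asboolP[U [_ <-]]; apply/dimvS/subvf.
have [d /asboolP[U [FU dimU]] max_d] := ex_maxnP ex_dim dim_ub.
exists U => x; split; first exact: FU.
move=> Fx; apply/negPn/negP => xNU.
have /max_d : dim_into_F (\dim <<U; x>>%AS).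
  by apply/asboolP; exists <<U; x>>%AS; split=> //; apply: into_F_adjoin.
apply/negP; rewrite -ltnNge -dimU.
have [leUx eqUx] := dimv_leqif_eq (subv_adjoin U x).
rewrite ltn_neqAle leUx andbT eqUx; apply: contra xNU => /eqP ->.
exact: memv_adjoin.
Qed.

Local Notation pQ := (map_poly (ratr : rat -> algC)).

(* The Galois correspondence in Q(zeta_n), applied to the preimage of F. *)
Lemma fixed_by_ZF n (z : algC) (F : algC -> Prop) (p : {poly rat}) :
  n.-primitive_root z -> is_subfield F ->
  (forall k, inZF n z F k -> (pQ p).[z ^+ k] = (pQ p).[z]) -> F (pQ p).[z].
Proof.
move=> prim_z hF fix_p.
have [Qn galQn [f [w fw]]] := cyclotomic_splitting_field prim_z.
have [U memU] := preim_subfield f hF.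
have galU : galois U {:Qn} by apply: galoisS galQn; rewrite sub1v subvf.
have prim_w : n.-primitive_root w by rewrite -fw fmorph_primitive_root in prim_z.
pose a := (map_poly ratr p).[w].
have <- : f a = (pQ p).[z] by rewrite rmorph_horner_ratr fw.
apply/memU; rewrite -(galois_fixedField galU); apply/fixedFieldP; first exact: memvf.
move=> s sG; have prim_sw : n.-primitive_root (s w) by rewrite fmorph_primitive_root.
have [k sw] := prim_rootP prim_w (prim_expr_order prim_sw).
have co_k : coprime k n by rewrite -(prim_root_exp_coprime k prim_w) -sw.
have s_fixU : {in U, forall x, s x = x}.
  by move: sG; rewrite gal_kHom ?subvf // => /kHomP_tmp[].
have s_eval q : s (map_poly ratr q).[w] = (map_poly ratr q).[w ^+ k].
  by rewrite rmorph_horner_ratr -sw.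
have ZF_k : inZF n z F k.
  split=> // q Fq; have qU : (map_poly ratr q).[w] \in U.
    by apply/memU; rewrite rmorph_horner_ratr fw.
  by rewrite -fw -rmorphXn -!rmorph_horner_ratr -s_eval s_fixU.
by apply: (fmorph_inj f); rewrite /a s_eval !rmorph_horner_ratr rmorphXn fw fix_p.
Qed.

Section GaloisEquivalence.
Variables (gT : finGroupType) (z : algC) (hz : (expo gT).-primitive_root z).
Variables (F : algC -> Prop) (hFL : forall x, F x -> inL z x).
Local Notation n1 := (expo gT).
Local Notation G := [set: gT]%G.
Local Notation ZF := (inZF n1 z F).

Lemma ZF_fixed u k x : acts_as_expn gT u k -> ZF k -> F x -> u x = x.
Proof.
move=> u_k [_ _ fixF] Fx; have [p Dx] := hFL Fx.
by rewrite Dx rmorph_horner_ratr u_k ?(prim_expr_order hz) // fixF // -Dx.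
Qed.

Lemma ZF_aut k : ZF k -> {u | acts_as_expn gT u k & forall x, F x -> u x = x}.
Proof.
move=> ZF_k; have [_ co_k _] := ZF_k; have [u u_k] := Qn_aut_exists co_k.
by exists u => [|x]; [apply: u_k | apply: ZF_fixed u_k ZF_k].
Qed.

Lemma ZF1 : ZF (1 %% n1).
Proof.
split; first by rewrite ltn_pmod ?expo_gt0.
  by rewrite coprime_modl coprime1n.
by move=> q _; rewrite (prim_expr_mod hz) expr1.
Qed.

Lemma ZFM k1 k2 : ZF k1 -> ZF k2 -> ZF ((k1 * k2) %% n1).
Proof.
move=> [_ co1 fix1] [_ co2 fix2]; split; first by rewrite ltn_pmod ?expo_gt0.
  by rewrite coprime_modl coprimeMl co1 co2.
move=> q Fq; have [u u_k2] := Qn_aut_exists co2.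
rewrite (prim_expr_mod hz) exprM -u_k2; last by rewrite exprAC (prim_expr_order hz) expr1n.
by rewrite -rmorph_horner_ratr fix1 // rmorph_horner_ratr u_k2 ?(prim_expr_order hz) // fix2.
Qed.

Lemma ZFX k m : ZF k -> ZF ((k ^ m) %% n1).
Proof.
move=> ZF_k; elim: m => [|m IHm]; first by rewrite expn0; apply: ZF1.
by rewrite expnSr -modnMml; apply: ZFM.
Qed.

Lemma ZF_inv k : ZF k -> exists2 k', ZF k' & (k * k' = 1 %[mod n1])%N.
Proof.
move=> ZF_k; exists ((k ^ (totient n1).-1) %% n1)%N; first exact: ZFX.
have [_ co_k _] := ZF_k.
by rewrite modnMmr; apply: mul_expn_totient_pred (expo_gt0 gT) co_k.
Qed.

Lemma mem_class_expg (h x : gT) k : h \in (x ^: G)%g -> (h ^+ k)%g \in ((x ^+ k) ^: G)%g.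
Proof. by case/imsetP => y _ ->; rewrite -conjXg memJ_class ?in_setT. Qed.

Lemma simF_refl (g : gT) : simF z F g g.
Proof. by exists (1 %% n1)%N; split; [apply: ZF1 | rewrite expg_mod_expo expg1 class_refl]. Qed.

Lemma simF_sym (g h : gT) : simF z F h g -> simF z F g h.
Proof.
move=> [k [ZF_k hk]]; have [k' ZF_k' kk'1] := ZF_inv ZF_k.
exists k'; split => //.
by move: (mem_class_expg k' hk); rewrite expgK_mod // class_sym ?in_setT.
Qed.

Lemma simF_trans (a b c : gT) : simF z F a b -> simF z F b c -> simF z F a c.
Proof.
move=> [k1 [ZF1 ab]] [k2 [ZF2 bc]].
exists ((k2 * k1) %% n1)%N; split; first exact: ZFM.
by rewrite expg_mod_expo expgM; apply: class_trans ab _; apply: mem_class_expg.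
Qed.

Lemma simF_expg (h : gT) k : ZF k -> simF z F (h ^+ k)%g h.
Proof. by move=> ZF_k; exists k; split => //; apply: class_refl. Qed.

Lemma simF_conjg (h y : gT) : simF z F (h ^ y)%g h.
Proof.
exists (1 %% n1)%N; split; first exact: ZF1.
by rewrite expg_mod_expo expg1 memJ_class ?in_setT.
Qed.

Definition simF_class (g : gT) : {set gT} := [set h | `[< simF z F h g >]].

Lemma simF_classP (h g : gT) : reflect (simF z F h g) (h \in simF_class g).
Proof. by rewrite inE; apply: asboolP. Qed.

Lemma simF_class_refl (g : gT) : g \in simF_class g.
Proof. by apply/simF_classP/simF_refl. Qed.

Lemma simF_class_eq (a b : gT) : simF z F a b -> simF_class a = simF_class b.
Proof.
move=> ab; apply/setP => h; apply/simF_classP/simF_classP => [ha | hb].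
  exact: simF_trans ha ab.
exact: simF_trans hb (simF_sym ab).
Qed.

Lemma eq_simF_class (a b : gT) : (simF_class a == simF_class b) = `[< simF z F a b >].
Proof.
apply/eqP/asboolP => [eq_ab | ]; last exact: simF_class_eq.
by apply/simF_classP; rewrite -eq_ab simF_class_refl.
Qed.

Lemma simF_class_conjg (h y g : gT) : ((h ^ y)%g \in simF_class g) = (h \in simF_class g).
Proof.
apply/simF_classP/simF_classP => hg; apply: simF_trans hg; last exact: simF_conjg.
exact/simF_sym/simF_conjg.
Qed.

Lemma simF_class_expg (h : gT) k (g : gT) : ZF k ->
  ((h ^+ k)%g \in simF_class g) = (h \in simF_class g).
Proof.
move=> ZF_k; apply/simF_classP/simF_classP => hg; apply: simF_trans hg.
  exact/simF_sym/simF_expg.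
exact: simF_expg.
Qed.

Lemma simF_class_invg (h g : gT) : ((h^-1)%g \in simF_class (g^-1)%g) = (h \in simF_class g).
Proof.
suff inv_hg a b : a \in simF_class b -> (a^-1)%g \in simF_class (b^-1)%g.
  by apply/idP/idP => [/inv_hg | /inv_hg //]; rewrite !invgK.
move=> /simF_classP[k [ZF_k /imsetP[y _ ->]]]; apply/simF_classP; exists k; split => //.
by rewrite expgVn -conjVg memJ_class ?in_setT.
Qed.

End GaloisEquivalence.

Section SubfieldEigenvalues.
Variables (gT : finGroupType) (z : algC) (hz : (expo gT).-primitive_root z).
Variables (F : algC -> Prop) (hF : is_subfield F) (hFL : forall x, F x -> inL z x).
Local Notation G := [set: gT]%G.
Local Notation ZF := (inZF (expo gT) z F).

Lemma irr_inL (i : Iirr G) x : inL z ('chi_i x).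
Proof.
have [m [e [e1 eE]]] := irr_expg_sum_unity i x.
rewrite -[x]expg1 eE; apply: inL_sum => j _.
by have [t ->] := prim_rootP hz (e1 j); rewrite expr1; apply: inL_exp.
Qed.

Lemma central_char_inL i (c : gT -> algC) : (forall x, inL z (c x)) -> inL z (central_char i c).
Proof.
move=> Lc; rewrite /central_char irr1_degree.
have -> (a : algC) m : a / m%:R = a * ratr m%:R^-1 by rewrite fmorphV rmorph_nat.
apply: inL_mul; last exact: inL_rat.
by apply: inL_sum => x _; apply: inL_mul => //; apply: irr_inL.
Qed.

Lemma eigenvalues_in_subfieldP (c : gT -> algC) : conj_invariant c -> (forall x, F (c x)) ->
  (forall a, eigenvalue (group_mx c) a -> F a) <->
  (forall k, ZF k -> forall x, c (x ^+ k)%g = c x).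
Proof.
move=> c_inv Fc; split=> [evF k ZF_k | c_ZF a /(eigenvalue_group_mx c_inv)[i ->]].
  have [_ co_k _] := ZF_k; have [u u_k u_F] := ZF_aut hz hFL ZF_k.
  apply/(central_char_fixedP c_inv co_k u_k (fun x => u_F _ (Fc x))) => i.
  exact/u_F/evF/eigenvalue_central_char.
have [p Dp] := central_char_inL i (fun x => hFL (Fc x)).
rewrite Dp; apply: (fixed_by_ZF hz hF) => k ZF_k.
have [_ co_k _] := ZF_k; have [u u_k u_F] := ZF_aut hz hFL ZF_k.
rewrite -(u_k z (prim_expr_order hz)) -rmorph_horner_ratr -Dp.
exact: (central_char_fixedP c_inv co_k u_k (fun x => u_F _ (Fc x))).2 (c_ZF k ZF_k) i.
Qed.

Lemma simF_invariant (c : gT -> algC) : conj_invariant c ->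
  (forall k, ZF k -> forall x, c (x ^+ k)%g = c x) ->
  forall h g, simF z F h g -> c h = c g.
Proof. by move=> c_inv c_ZF h g [k [ZF_k /imsetP[y _ ->]]]; rewrite c_inv c_ZF. Qed.

End SubfieldEigenvalues.

Section SimFMatrices.
Variables (gT : finGroupType) (z : algC) (hz : (expo gT).-primitive_root z).
Variables (F : algC -> Prop) (hF : is_subfield F).
Local Notation ZF := (inZF (expo gT) z F).
Local Notation clF := (simF_class z F).

Definition simF_ind (g h : gT) : algC := (h \in clF g)%:R.

Lemma Bmat_group_mx g : Bmat z F g = group_mx (simF_ind g).
Proof. by rewrite /Bmat sum_Amat_pred; apply: group_mx_ext => h; rewrite /simF_ind inE. Qed.

Lemma simF_ind_conj_invariant g : conj_invariant (simF_ind g).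
Proof. by move=> x y; rewrite /simF_ind simF_class_conjg. Qed.

Lemma simF_ind_expg g k : ZF k -> forall x, simF_ind g (x ^+ k)%g = simF_ind g x.
Proof. by move=> ZF_k x; rewrite /simF_ind simF_class_expg. Qed.

Lemma simF_ind_subfield g x : F (simF_ind g x).
Proof. exact: subfield_nat. Qed.

Lemma sum_Bmat (d : gT -> algC) :
  \sum_g d g *: Bmat z F g = group_mx (fun h => \sum_g d g * simF_ind g h).
Proof. by under eq_bigr do rewrite Bmat_group_mx; rewrite group_mx_sum. Qed.

Lemma group_mx_simF_invariant (c : gT -> algC) :
  (forall h g, simF z F h g -> c h = c g) ->
  group_mx c = \sum_g (c g / #|clF g|%:R) *: Bmat z F g.
Proof.
move=> c_simF; rewrite sum_Bmat; apply: group_mx_ext => h.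
rewrite (bigID (fun g => h \in clF g)) /= [X in _ + X]big1 ?addr0; last first.
  by move=> g hNg; rewrite /simF_ind (negbTE hNg) mulr0.
rewrite (eq_bigr (fun _ => c h / #|clF h|%:R)) => [|g hg]; last first.
  have /simF_classP hg' := hg.
  by rewrite /simF_ind hg mulr1 (c_simF _ _ hg') (simF_class_eq hz hg').
rewrite sumr_const.
have -> : #|[pred g | h \in clF g]| = #|clF h|.
  by apply: eq_card => g; rewrite !inE; apply/asboolP/asboolP; apply: (simF_sym hz).
rewrite -[_ *+ _]mulr_natr divfK // pnatr_eq0 -lt0n.
by apply/card_gt0P; exists h; apply: (simF_class_refl hz).
Qed.

End SimFMatrices.

Section FSpan.
Variables (gT : finGroupType) (z : algC) (hz : (expo gT).-primitive_root z).
Variables (F : algC -> Prop) (hF : is_subfield F) (hFL : forall x, F x -> inL z x).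
Local Notation G := [set: gT]%G.

Lemma LA_eigen_FspanB (M : 'M[algC]_#|gT|) :
  in_LA z M -> (forall i j, F (M i j)) -> (forall a, eigenvalue M a -> F a) ->
  in_FspanB z F M.
Proof.
move=> [cK [_ DM]] FM evF; pose c g := cK (g ^: G)%g.
have DMc : M = group_mx c by rewrite DM sum_classes_AmatS.
have c_inv : conj_invariant c by move=> x y; rewrite /c classGidl ?in_setT.
have Fc x : F (c x) by have := FM (enum_rank 1%g) (enum_rank x); rewrite DMc group_mx1.
have c_ZF := (eigenvalues_in_subfieldP hz hF hFL c_inv Fc).1.
exists (fun g => c g / #|simF_class z F g|%:R); split.
  by move=> g; apply: (subfieldM hF (Fc g)); apply/(subfieldV hF)/(subfield_nat hF).
rewrite DMc; apply: (group_mx_simF_invariant hz); apply: simF_invariant c_inv _.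
by apply: c_ZF; rewrite -DMc.
Qed.

Lemma FspanB_LA_eigen (M : 'M[algC]_#|gT|) : in_FspanB z F M ->
  [/\ in_LA z M, forall i j, F (M i j) & forall a, eigenvalue M a -> F a].
Proof.
move=> [d [Fd ->]]; rewrite sum_Bmat.
set c := fun h => \sum_g d g * simF_ind z F g h.
have Fc x : F (c x).
  by apply: (subfield_sum hF) => g _; apply/(subfieldM hF (Fd g))/(simF_ind_subfield _ hF).
have c_inv : conj_invariant c.
  by move=> x y; apply: eq_bigr => g _; rewrite simF_ind_conj_invariant.
split=> [|i j|].
- exists (fun K => c (repr K)); split=> [K|]; first exact: hFL.
  rewrite sum_classes_AmatS; apply: group_mx_ext => g.
  by have [y ->] := repr_class_conjg g.
- by rewrite mxE.
apply/(eigenvalues_in_subfieldP hz hF hFL c_inv Fc) => k ZF_k x.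
by apply: eq_bigr => g _; rewrite (simF_ind_expg hz).
Qed.

Lemma normal_Cayley_eigenP (C : {set gT}) : (forall g x, g \in C -> (g ^ x)%g \in C) ->
  (forall a, eigenvalue (AmatS C) a -> F a) <->
  (forall g h, g \in C -> simF z F h g -> h \in C).
Proof.
move=> normC; pose c g := (g \in C)%:R : algC.
have memJC (x y : gT) : ((x ^ y)%g \in C) = (x \in C).
  by apply/idP/idP => [/(normC _ (y^-1)%g) | /normC //]; rewrite conjgK.
have c_inv : conj_invariant c by move=> x y; rewrite /c memJC.
have Fc x : F (c x) by apply: subfield_nat.
rewrite AmatS_group_mx (eigenvalues_in_subfieldP hz hF hFL c_inv Fc).
split=> [c_ZF g h Cg hg | closedC k ZF_k x].
  have := simF_invariant c_inv c_ZF hg; rewrite /c Cg.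
  by case: (h \in C) => // /esym/eqP; rewrite oner_eq0.
rewrite /c; suff -> : ((x ^+ k)%g \in C) = (x \in C) by [].
apply/idP/idP => [|Cx].
  by move/closedC; apply; apply/(simF_sym hz)/simF_expg.
by apply: closedC Cx _; apply: simF_expg.
Qed.

End FSpan.

Section Subscheme.
Variables (gT : finGroupType) (z : algC) (hz : (expo gT).-primitive_root z).
Variables (F : algC -> Prop) (hF : is_subfield F) (hFL : forall x, F x -> inL z x).
Local Notation G := [set: gT]%G.
Local Notation ZF := (inZF (expo gT) z F).
Local Notation clF := (@simF_class gT z F).
Local Notation B := (@Bmat gT z F).
Local Notation ind := (@simF_ind gT z F).
Implicit Types (g : gT) (i j : 'I_#|gT|).

Lemma Bmat_entry g i j : B g i j = ind g (enum_val j * (enum_val i)^-1)%g.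
Proof. by rewrite Bmat_group_mx mxE. Qed.

Lemma Bmat_entry_eq1 g i j :
  B g i j = 1 <-> simF z F (enum_val j * (enum_val i)^-1)%g g.
Proof.
rewrite Bmat_entry /simF_ind; case: simF_classP => //= hg; split=> //.
by move/eqP; rewrite eq_sym oner_eq0.
Qed.

Lemma Bmat_entry01 g i j : B g i j = 0 \/ B g i j = 1.
Proof. by rewrite Bmat_entry /simF_ind; case: (_ \in _); [right | left]. Qed.

Lemma Bmat_neq0 g : B g != 0.
Proof.
apply/eqP => /matrixP /(_ (enum_rank 1%g) (enum_rank g)).
by rewrite Bmat_group_mx group_mx1 mxE /simF_ind simF_class_refl // => /eqP; rewrite oner_eq0.
Qed.

Lemma Bmat1 : B 1%g = 1%:M.
Proof.
have clF1 (w : gT) : (w \in clF 1%g) = (w == 1%g).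
  apply/simF_classP/eqP => [[k [_]] | ->]; last exact: simF_refl.
  by rewrite expg1n class1G inE => /eqP.
apply/matrixP => i j; rewrite Bmat_entry /simF_ind clF1 !mxE.
by rewrite -eq_mulgV1 (inj_eq enum_val_inj) eq_sym.
Qed.

Lemma Bmat_self i j : B (enum_val j * (enum_val i)^-1)%g i j = 1.
Proof. by apply/Bmat_entry_eq1/simF_refl. Qed.

Lemma Bmat_simF h g : simF z F h g -> B h = B g.
Proof. by move=> hg; rewrite !Bmat_group_mx /simF_ind (simF_class_eq hz hg). Qed.

Lemma Bmat_eq g i j : B g i j = 1 -> B g = B (enum_val j * (enum_val i)^-1)%g.
Proof. by move/Bmat_entry_eq1/Bmat_simF ->. Qed.

Lemma trmx_Bmat g : (B g)^T = B (g^-1)%g.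
Proof.
apply/matrixP => i j; rewrite mxE !Bmat_entry /simF_ind.
by rewrite -simF_class_invg invMg invgK.
Qed.

Lemma conv_simF_ind_expg g1 g2 :
  forall k, ZF k -> forall x, conv (ind g1) (ind g2) (x ^+ k)%g = conv (ind g1) (ind g2) x.
Proof.
have ind_inv := simF_ind_conj_invariant hz F.
have F_ind := @simF_ind_subfield gT z F hF.
have conv_inv := conj_invariant_conv (ind_inv g1) (ind_inv g2).
have F_conv x : F (conv (ind g1) (ind g2) x).
  by apply: (subfield_sum hF) => y _; apply: (subfieldM hF).
have F_ev g : forall a, eigenvalue (group_mx (ind g)) a -> F a.
  apply: (eigenvalues_in_subfieldP hz hF hFL (ind_inv g) (F_ind g)).2.
  exact: (@simF_ind_expg gT z hz F g).
apply/(eigenvalues_in_subfieldP hz hF hFL conv_inv F_conv) => a.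
move=> /(eigenvalue_group_mx conv_inv)[i ->]; rewrite central_charM //.
by apply: (subfieldM hF); apply/F_ev/eigenvalue_central_char.
Qed.

Lemma BmatM_simF g1 g2 i j i' j' :
  simF z F (enum_val j' * (enum_val i')^-1)%g (enum_val j * (enum_val i)^-1)%g ->
  (B g1 *m B g2) i j = (B g1 *m B g2) i' j'.
Proof.
rewrite !Bmat_group_mx group_mxM !mxE => /simF_invariant -> //.
  exact: conj_invariant_conv (simF_ind_conj_invariant hz F g1) (simF_ind_conj_invariant hz F g2).
exact: conv_simF_ind_expg.
Qed.

Lemma sum_AmatS_classes (b : {set {set gT}}) : b \subset classes G ->
  \sum_(K in b) AmatS K = group_mx (fun g => ((g ^: G)%g \in b)%:R).
Proof.
move=> sbG; rewrite -(sum_classes_AmatS (fun K => (K \in b)%:R)) big_mkcond [RHS]big_mkcond /=.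
apply: eq_bigr => K _; case: ifPn => [bK | bNK]; first by rewrite (subsetP sbG) ?scale1r.
by case: ifP => _; rewrite ?scale0r.
Qed.

Definition simF_block (K0 : {set gT}) : {set {set gT}} :=
  [set K in classes G | clF (repr K0) == clF (repr K)].

Lemma sum_simF_block K0 : \sum_(K in simF_block K0) AmatS K = B (repr K0).
Proof.
rewrite sum_AmatS_classes; last by apply/subsetP => K; rewrite inE => /andP[].
rewrite Bmat_group_mx; apply: group_mx_ext => g; congr (nat_of_bool _)%:R.
rewrite inE mem_classes ?in_setT //=; have [y ->] := repr_class_conjg g.
rewrite (simF_class_eq hz (simF_conjg hz F g y)).
rewrite eq_simF_class //; apply/asboolP/simF_classP; exact: simF_sym.
Qed.

Lemma Bmat_subscheme : is_subscheme (fun M => exists g : gT, M = B g).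
Proof.
split; first split.
- by move=> M [g ->]; split=> [|i j]; [apply: Bmat_neq0 | apply: Bmat_entry01].
- by exists 1%g; rewrite Bmat1.
- move=> i j; exists (B (enum_val j * (enum_val i)^-1)%g).
  by split=> [|_ [[g ->] /Bmat_eq]] //; split; [eexists | apply: Bmat_self].
- by move=> M [g ->]; exists (g^-1)%g; rewrite trmx_Bmat.
- move=> M N P [g1 ->] [g2 ->] [g3 ->] i j i' j' /Bmat_entry_eq1 h3 /Bmat_entry_eq1 h3'.
  by apply: BmatM_simF; apply: simF_trans h3' (simF_sym hz h3).
exists (preim_partition (fun K : {set gT} => clF (repr K)) (classes G)).
split=> [|M]; first exact: preim_partitionP.
split=> [[g ->] | [b /imsetP[K0 K0G ->] ->]]; last by exists (repr K0); rewrite sum_simF_block.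
exists (simF_block (g ^: G)%g); first by apply: imset_f; rewrite mem_classes ?in_setT.
rewrite sum_simF_block; have [y ->] := repr_class_conjg g.
by rewrite (Bmat_simF (simF_conjg hz F g y)).
Qed.

End Subscheme.

Theorem theorem9p1 (gT : finGroupType) (z : algC)
  (hz : (expo gT).-primitive_root z)
  (F : algC -> Prop) (hF : is_subfield F) (hFL : forall x, F x -> inL z x) :
  [/\ (forall M : 'M[algC]_#|gT|,
         (in_LA z M /\ (forall i j, F (M i j)) /\ (forall a, eigenvalue M a -> F a))
         <-> in_FspanB z F M),
      is_subscheme (fun M => exists g : gT, M = Bmat z F g) &
      (forall C : {set gT}, (forall g x, g \in C -> (g ^ x)%g \in C) ->
         ((forall a, eigenvalue (AmatS C) a -> F a) <->
          (forall g h, g \in C -> simF z F h g -> h \in C)))].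
Proof.
split=> [M | | C normC]; last 2 first.
- exact: (Bmat_subscheme hz hF hFL).
- exact: (normal_Cayley_eigenP hz hF hFL normC).
split=> [[LM [FM evM]] | /(FspanB_LA_eigen hz hF hFL)[LM FM evM]] //.
exact: (LA_eigen_FspanB hz hF hFL LM FM evM).
Qed.
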